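(* The maximal adjacency cliques of $\mathcal G$ (i.e. the subsets of $\mathcal G$ consisting of mutually adjacent elements that are maximal with respect to inclusion among such subsets) are precisely the stars and the tops.
   Context: $K$ is a (not necessarily commutative) field and $V$ is a left vector space over $K$ of arbitrary (possibly infinite) dimension with $\dim V>2$. $\mathcal G:=\{X\le V\mid X\cong V/X\}$, assumed nonempty. Two elements $X,Y\in\mathcal G$ are adjacent if $\dim((X+Y)/X)=\dim((X+Y)/Y)=1$. A star is a set $\mathcal G[M\rangle:=\{E\le V\mid M\le E,\ \dim(E/M)=1\}$, where $M\le V$ is a subspace for which some $X\in\mathcal G$ satisfies $M\le X$, $\dim(X/M)=1$. A top is a set $\mathcal G\langle N]:=\{E\le V\mid E\le N,\ \dim(N/E)=1\}$, where $N\le V$ is a subspace for which some $X\in\mathcal G$ satisfies $X\le N$, $\dim(N/X)=1$. *)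

From HB Require Import structures.
From mathcomp Require Import all_boot all_algebra.
From mathcomp Require Import boolp classical_sets.
Set Implicit Arguments. Unset Strict Implicit. Unset Printing Implicit Defensive.
Import GRing.Theory.
Local Open Scope ring_scope.
Local Open Scope classical_set_scope.

Definition division_ring (K : unitRingType) : Prop :=
  forall x : K, x != 0 -> x \is a GRing.unit.

Section Defs.
Variables (K : unitRingType) (V : lmodType K).

Definition subspace (X : set V) : Prop :=
  X 0 /\ forall (a : K) (x y : V), X x -> X y -> X (a *: x + y).

Definition addsp (X Y : set V) : set V :=
  [set z | exists x y, X x /\ Y y /\ z = x + y].

(* M <= E and dim (E/M) = 1 : E/M is spanned by the class of one vector v
   not in M. *)
Definition codim1 (M E : set V) : Prop :=
  M `<=` E /\
  exists v, E v /\ ~ M v /\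
    forall e, E e -> exists (a : K) m, M m /\ e = a *: v + m.

(* X is isomorphic (as a left K-space) to V/X: there is a K-linear map
   x |-> [f x] from X to V/X which is injective and surjective. *)
Definition iso_to_quot (X : set V) : Prop :=
  exists f : V -> V,
    (forall (a : K) x y, X x -> X y -> f (a *: x + y) = a *: f x + f y) /\
    (forall x, X x -> X (f x) -> x = 0) /\
    (forall v, exists x, X x /\ X (f x - v)).

Definition Gset : set (set V) := [set X | subspace X /\ iso_to_quot X].

Definition adjacent (X Y : set V) : Prop :=
  codim1 X (addsp X Y) /\ codim1 Y (addsp X Y).

Definition adj_clique (C : set (set V)) : Prop :=
  C `<=` Gset /\ forall X Y, C X -> C Y -> X <> Y -> adjacent X Y.

Definition maximal_adj_clique (C : set (set V)) : Prop :=
  adj_clique C /\ forall C', adj_clique C' -> C `<=` C' -> C' = C.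

Definition star_base (M : set V) : Prop :=
  subspace M /\ exists X, Gset X /\ codim1 M X.
Definition star (M : set V) : set (set V) :=
  [set E | subspace E /\ codim1 M E].

Definition top_base (N : set V) : Prop :=
  subspace N /\ exists X, Gset X /\ codim1 X N.
Definition top (N : set V) : set (set V) :=
  [set E | subspace E /\ codim1 E N].

Definition dim_gt2 : Prop :=
  exists u v w : V, forall a b c : K,
    a *: u + b *: v + c *: w = 0 -> [/\ a = 0, b = 0 & c = 0].

End Defs.

From HB Require Import structures.
From mathcomp Require Import all_boot all_algebra.
From mathcomp Require Import boolp classical_sets.
Set Implicit Arguments. Unset Strict Implicit. Unset Printing Implicit Defensive.
Import GRing.Theory.
Local Open Scope ring_scope.
Local Open Scope classical_set_scope.

(* Two distinct adjacent X, Y in G determine M = X `&` Y and N = X + Y, and every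
   third member of a clique through X and Y either contains M or lies in N; a short
   argument shows that the whole clique takes the same side, so every clique lies in a
   star or a top.  Conversely stars and tops are cliques: G is stable under linear
   involutions of V, and two members of a star are exchanged by a reflection fixing
   their common hyperplane.  They are maximal because, as dim V > 2 and X is isomorphic
   to V/X, no element of G outside a star (top) is adjacent to all of its members. *)

Section Subspaces.
Variables (K : unitRingType) (V : lmodType K).
Implicit Types (A E H M N S X Y Z : set V) (p u v w x y z : V) (a b c : K).

Lemma subspace0 X : subspace X -> X 0.
Proof. by case. Qed.

Lemma subspaceD X x y : subspace X -> X x -> X y -> X (x + y).
Proof. by case=> _ sX Xx Xy; have := sX 1 x y Xx Xy; rewrite scale1r. Qed.

Lemma subspaceZ X a x : subspace X -> X x -> X (a *: x).
Proof. by case=> X0 sX Xx; have := sX a x 0 Xx X0; rewrite addr0. Qed.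

Lemma subspaceN X x : subspace X -> X x -> X (- x).
Proof. by move=> sX Xx; rewrite -scaleN1r; exact: subspaceZ. Qed.

Lemma subspaceB X x y : subspace X -> X x -> X y -> X (x - y).
Proof. by move=> sX Xx Xy; apply: subspaceD => //; exact: subspaceN. Qed.

Lemma subspace_lin X a x y : subspace X -> X x -> X y -> X (a *: x + y).
Proof. by case=> _; apply. Qed.

Lemma subspace_zero : subspace [set 0 : V].
Proof. by split=> // a _ _ -> ->; rewrite scaler0 addr0. Qed.

Lemma subspaceI X Y : subspace X -> subspace Y -> subspace (X `&` Y).
Proof.
move=> sX sY; split; first by split; exact: subspace0.
by move=> a x y [Xx Yx] [Xy Yy]; split; exact: subspace_lin.
Qed.

Definition adjoin A w : set V := [set z | exists c m, A m /\ z = c *: w + m].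

Lemma subspace_adjoin A w : subspace A -> subspace (adjoin A w).
Proof.
move=> sA; split; first by exists 0, 0; rewrite scale0r addr0; split=> //; exact: subspace0.
move=> a _ _ [c [x [Ax ->]]] [c' [y [Ay ->]]].
exists (a * c + c'), (a *: x + y); split; first exact: subspace_lin.
by rewrite scalerDr scalerDl scalerA addrACA.
Qed.

Lemma sub_adjoin A w : A `<=` adjoin A w.
Proof. by move=> a Aa; exists 0, a; rewrite scale0r add0r. Qed.

Lemma adjoin_vec A w : subspace A -> adjoin A w w.
Proof. by move=> sA; exists 1, 0; rewrite scale1r addr0; split=> //; exact: subspace0. Qed.

Lemma adjoin_min A E w : subspace E -> A `<=` E -> E w -> adjoin A w `<=` E.
Proof. by move=> sE AE Ew _ [c [m [Am ->]]]; apply: subspace_lin => //; exact: AE. Qed.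

Lemma codim1_adjoin A w : subspace A -> ~ A w -> codim1 A (adjoin A w).
Proof.
move=> sA nAw; split; first exact: sub_adjoin.
by exists w; split; [exact: adjoin_vec|split=> // e [c [m [Am ->]]]; exists c, m].
Qed.

Lemma codim1_not_sup M E : codim1 M E -> ~ E `<=` M.
Proof. by case=> _ [v [Ev [nMv _]]] EM; apply/nMv/EM. Qed.

Lemma addspC X Y : addsp X Y = addsp Y X.
Proof. by apply/seteqP; split=> _ [x [y [Xx [Yy ->]]]]; exists y, x; rewrite addrC. Qed.

Lemma subspace_addsp X Y : subspace X -> subspace Y -> subspace (addsp X Y).
Proof.
move=> sX sY; split.
  by exists 0, 0; rewrite addr0; split; [|split]; first [exact: subspace0|done].
move=> a _ _ [x [y [Xx [Yy ->]]]] [x' [y' [Xx' [Yy' ->]]]].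
exists (a *: x + x'), (a *: y + y'); split; first exact: subspace_lin.
by split; [exact: subspace_lin|rewrite scalerDr addrACA].
Qed.

Lemma addsp_subl X Y : subspace Y -> X `<=` addsp X Y.
Proof.
by move=> sY x Xx; exists x, 0; rewrite addr0; split; [|split]; first [exact: subspace0|done].
Qed.

Lemma addsp_subr X Y : subspace X -> Y `<=` addsp X Y.
Proof. by move=> sX y Yy; exists 0, y; rewrite add0r; split; [exact: subspace0|]. Qed.

Lemma addsp_min X Y N : subspace N -> X `<=` N -> Y `<=` N -> addsp X Y `<=` N.
Proof. by move=> sN XN YN _ [x [y [Xx [Yy ->]]]]; apply: subspaceD; [|exact: XN|exact: YN]. Qed.

Lemma adjoin_addsp X Y y : subspace X -> subspace Y -> Y y -> adjoin X y `<=` addsp X Y.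
Proof.
move=> sX sY Yy; apply: adjoin_min; [exact: subspace_addsp|exact: addsp_subl|exact: addsp_subr].
Qed.

Lemma adjacent_sym X Y : adjacent X Y -> adjacent Y X.
Proof. by rewrite /adjacent addspC => -[]. Qed.

Lemma adjacent_not_sub X Z : subspace X -> adjacent X Z -> ~ Z `<=` X.
Proof. by move=> sX [cX _] ZX; apply: (codim1_not_sup cX); apply: addsp_min. Qed.

Lemma codim1_cap X Z : subspace X -> subspace Z ->
  codim1 Z (addsp X Z) -> codim1 (X `&` Z) X.
Proof.
move=> sX sZ [_ [_ [[x [z [Xx [Zz ->]]]] [nZv hv]]]].
have nZx : ~ Z x by move=> Zx; apply: nZv; apply: subspaceD.
split; first by move=> ? [].
exists x; split=> //; split; first by case.
move=> x' Xx'; have [a [z' [Zz' e]]] := hv x' (addsp_subl sZ Xx').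
exists a, (x' - a *: x); split; last by rewrite addrC subrK.
split; first by apply: subspaceB => //; exact: subspaceZ.
have -> : x' - a *: x = a *: z + z' by rewrite e scalerDr addrAC [a *: x + _]addrC addrK.
exact: subspace_lin.
Qed.

Lemma adjacent_codim1_cap X Y : subspace X -> subspace Y ->
  adjacent X Y -> codim1 (X `&` Y) X.
Proof. by move=> sX sY [_]; apply: codim1_cap. Qed.

Definition linear_on X (f : V -> V) :=
  forall a x y, X x -> X y -> f (a *: x + y) = a *: f x + f y.

Lemma linear_on0 X f : subspace X -> linear_on X f -> f 0 = 0.
Proof.
move=> sX lf; have := lf 1 0 0 (subspace0 sX) (subspace0 sX).
by rewrite !scale1r addr0 => e; apply: (addrI (f 0)); rewrite addr0 -e.
Qed.

Lemma linear_onZ X f a x : subspace X -> linear_on X f -> X x -> f (a *: x) = a *: f x.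
Proof.
by move=> sX lf Xx; have := lf a x 0 Xx (subspace0 sX); rewrite addr0 (linear_on0 sX lf) addr0.
Qed.

Lemma linear_onB X f x y : subspace X -> linear_on X f -> X x -> X y ->
  f (x - y) = f x - f y.
Proof.
by move=> sX lf Xx Xy; rewrite addrC -scaleN1r lf // scaleN1r addrC.
Qed.

Definition linear_form (lam : V -> K) := forall a x y, lam (a *: x + y) = a * lam x + lam y.

Lemma linear_form0 lam : linear_form lam -> lam 0 = 0.
Proof.
move=> fl; have := fl 1 0 0; rewrite scale1r mul1r addr0 => e.
by apply: (addrI (lam 0)); rewrite addr0 -e.
Qed.

Lemma linear_formD lam x y : linear_form lam -> lam (x + y) = lam x + lam y.
Proof. by move=> fl; have := fl 1 x y; rewrite scale1r mul1r. Qed.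

Lemma linear_formZ lam a x : linear_form lam -> lam (a *: x) = a * lam x.
Proof. by move=> fl; have := fl a x 0; rewrite addr0 linear_form0 // addr0. Qed.

Lemma linear_formB lam x y : linear_form lam -> lam (x - y) = lam x - lam y.
Proof. by move=> fl; rewrite addrC -scaleN1r fl mulN1r addrC. Qed.

Definition free2 v w := forall b c, b *: v + c *: w = 0 -> b = 0 /\ c = 0.

Definition free3 u v w :=
  forall a b c, a *: u + b *: v + c *: w = 0 -> [/\ a = 0, b = 0 & c = 0].

Lemma free3_swap12 u v w : free3 u v w -> free3 v u w.
Proof. by move=> h a b c e; have [] := h b a c; [rewrite (addrC (b *: u))|]. Qed.

Lemma free3_swap23 u v w : free3 u v w -> free3 u w v.
Proof. by move=> h a b c e; have [] := h a c b; [rewrite addrAC|]. Qed.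

Lemma free3_free2 u v w : free3 u v w -> free2 u v.
Proof. by move=> h b c e; have [] := h b c 0; [rewrite scale0r addr0|]. Qed.

Lemma free3_elim u v w k l : free3 u v w -> free2 (v - k *: u) (w - l *: u).
Proof.
move=> h b c e; have [] := h (- (b * k + c * l)) b c => //.
by rewrite -e !scalerBr !scalerA scaleNr scalerDl opprD [RHS]addrACA addrC addrA.
Qed.

End Subspaces.

Arguments subspace_zero {K V}.

Section DivisionRing.
Variables (K : unitRingType) (V : lmodType K).
Hypothesis divK : division_ring K.
Implicit Types (A E H M N S X Y Z : set V) (p q u v w x y z : V) (a b c : K).

Lemma divr_mulVr a : a <> 0 -> a^-1 * a = 1.
Proof. by move/eqP/divK/mulVr. Qed.

Lemma divr_scalerK a v : a <> 0 -> a^-1 *: (a *: v) = v.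
Proof. by move=> a0; rewrite scalerA divr_mulVr // scale1r. Qed.

Lemma adjoin_exchange Y p q : subspace Y -> ~ Y q -> adjoin Y p q -> adjoin Y q p.
Proof.
move=> sY nYq [c [y [Yy eq]]].
have c0 : c <> 0 by move=> c0; apply: nYq; rewrite eq c0 scale0r add0r.
exists c^-1, (- (c^-1 *: y)); split; first by apply: subspaceN => //; exact: subspaceZ.
by rewrite eq scalerDr divr_scalerK // addrK.
Qed.

Lemma codim1_sub_adjoin Y S p : subspace Y -> codim1 Y S -> S p -> ~ Y p ->
  S `<=` adjoin Y p.
Proof.
move=> sY [_ [v [_ [_ hv]]]] Sp nYp s /hv.
apply: adjoin_min; [exact: subspace_adjoin|exact: sub_adjoin|].
exact: adjoin_exchange sY nYp (hv p Sp).
Qed.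

Lemma codim1E Y S p : subspace Y -> subspace S -> codim1 Y S -> S p -> ~ Y p ->
  S = adjoin Y p.
Proof.
move=> sY sS cYS Sp nYp; apply/seteqP; split; first exact: codim1_sub_adjoin.
by apply: adjoin_min => //; case: cYS.
Qed.

Lemma codim1_inj M X E u : subspace M -> subspace X -> subspace E ->
  codim1 M X -> codim1 M E -> X u -> ~ M u -> E u -> X = E.
Proof.
move=> sM sX sE cX cE Xu nMu Eu.
by rewrite (codim1E sM sX cX Xu nMu) (codim1E sM sE cE Eu nMu).
Qed.

Lemma codim1_uniq H1 H2 S : subspace H1 -> subspace H2 -> H1 `<=` H2 ->
  codim1 H1 S -> codim1 H2 S -> H1 = H2.
Proof.
move=> s1 s2 H12 c1 c2; apply/seteqP; split=> // h H2h; apply: contrapT => nH1h.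
apply: (codim1_not_sup c2); apply: subset_trans (codim1_sub_adjoin s1 c1 _ nH1h) _.
  by case: c2 => + _; apply.
exact: adjoin_min.
Qed.

Lemma codim1_sup_uniq X S N : subspace X -> subspace S -> S `<=` N ->
  codim1 X S -> codim1 X N -> S = N.
Proof.
move=> sX sS SN cS cN; apply/seteqP; split=> //.
have /existsPNP [s Ss nXs] := codim1_not_sup cS.
apply: subset_trans (codim1_sub_adjoin sX cN (SN s Ss) nXs) _.
by apply: adjoin_min => //; case: cS.
Qed.

Lemma free2_collinear v w p b c : free2 v w -> v = b *: p -> w = c *: p -> False.
Proof.
move=> h ev ew; have [b0|b0] := pselect (b = 0).
  have [] : (1 : K) = 0 /\ (0 : K) = 0.
    by apply: h; rewrite ev b0 !(scale0r, scaler0) addr0.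
  by move/eqP; rewrite oner_eq0.
have [_] : c * b^-1 = 0 /\ (-1 : K) = 0.
  by apply: h; rewrite ev ew scalerA -mulrA divr_mulVr // mulr1 scaleN1r subrr.
by move/eqP; rewrite oppr_eq0 oner_eq0.
Qed.

Lemma free3_lead_span2 u v w p q a1 a2 b1 b2 c1 c2 : free3 u v w -> a1 <> 0 ->
  u = a1 *: p + a2 *: q -> v = b1 *: p + b2 *: q -> w = c1 *: p + c2 *: q -> False.
Proof.
move=> h a10 eu ev ew.
have elim x d1 d2 : x = d1 *: p + d2 *: q ->
    x - (d1 * a1^-1) *: u = (d2 - d1 * a1^-1 * a2) *: q.
  move=> ->; rewrite eu scalerDr !scalerA -mulrA divr_mulVr // mulr1 scalerBl.
  by rewrite opprD addrACA subrr add0r.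
exact: free2_collinear (free3_elim h) (elim _ _ _ ev) (elim _ _ _ ew).
Qed.

Lemma not_spanned_by_two p q : dim_gt2 V -> ~ (forall z, exists s t, z = s *: p + t *: q).
Proof.
move=> [u [v [w h]]] span.
have [a1 [a2 eu]] := span u; have [b1 [b2 ev]] := span v; have [c1 [c2 ew]] := span w.
have [a10|a10] := pselect (a1 = 0); last exact: free3_lead_span2 h a10 eu ev ew.
have [b10|b10] := pselect (b1 = 0); last exact: free3_lead_span2 (free3_swap12 h) b10 ev eu ew.
have [c10|c10] := pselect (c1 = 0).
  apply: free2_collinear (free3_free2 h) _ _.
    by rewrite eu a10 scale0r add0r.
  by rewrite ev b10 scale0r add0r.
exact: free3_lead_span2 (free3_swap12 (free3_swap23 h)) c10 ew eu ev.
Qed.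

Lemma Gset_not_in_line X y0 : dim_gt2 V -> Gset X -> X y0 ->
  ~ (forall y, X y -> exists c, y = c *: y0).
Proof.
move=> dV [sX [f [lf [_ sur]]]] Xy0 line.
apply: (not_spanned_by_two (p := f y0) (q := y0) dV) => z.
have [x [Xx Xfx]] := sur z; have [d ed] := line _ Xfx.
have [c ex] := line x Xx; exists c, (- d).
by rewrite scaleNr -ed -(linear_onZ c sX lf Xy0) -ex opprB addrC subrK.
Qed.

Lemma Gset_adjoin_not_full X m : dim_gt2 V -> Gset X -> exists w, ~ adjoin X m w.
Proof.
move=> dV GX; apply: contrapT => /forallNP full.
have {}full w : adjoin X m w by apply: contrapT; apply: full.
have [sX [f [lf [inj _]]]] := GX.
have [[x1 Xx1 nXfx1]|] := pselect (exists2 x1, X x1 & ~ X (f x1)); last first.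
  move/forallPNP => fX; apply: (Gset_not_in_line dV GX (subspace0 sX)) => y Xy.
  by exists 0; rewrite scaler0; apply: inj => //; apply: contrapT; apply: fX.
apply: (Gset_not_in_line dV GX Xx1) => y Xy.
have full1 : adjoin X (f x1) (f y).
  apply: adjoin_min (subspace_adjoin _ sX) (@sub_adjoin _ _ X _) _ _ (full (f y)).
  exact: adjoin_exchange sX nXfx1 (full (f x1)).
have [c [x [Xx efy]]] := full1; exists c; apply/eqP; rewrite -subr_eq0; apply/eqP.
have Xcx1 : X (c *: x1) by exact: subspaceZ.
apply: inj; first exact: subspaceB.
by rewrite (linear_onB sX lf) // efy (linear_onZ _ sX lf Xx1) addrAC subrr add0r.
Qed.

Definition avoiding A w H := [/\ subspace H, A `<=` H & ~ H w].

Lemma avoiding_bigcup_chain A w (F : set (set V)) :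
  F `<=` [set H | H = set0 \/ avoiding A w H] -> total_on F subset ->
  (exists2 H, F H & H !=set0) -> avoiding A w (\bigcup_(H in F) H).
Proof.
move=> Fav Ftot [H0 FH0 [x0 H0x0]].
have av H x : F H -> H x -> avoiding A w H.
  by move=> FH Hx; case: (Fav H FH) => // eH; move: Hx; rewrite eH.
have [sH0 AH0 _] := av _ _ FH0 H0x0.
split; last by move=> [H FH Hw]; have [_ _] := av _ _ FH Hw; apply.
  split; first by exists H0 => //; exact: subspace0.
  move=> a x y [Hx FHx xHx] [Hy FHy yHy].
  have [sHx _ _] := av _ _ FHx xHx; have [sHy _ _] := av _ _ FHy yHy.
  have [HxHy|HyHx] := Ftot _ _ FHx FHy.
    by exists Hy => //; apply: subspace_lin => //; exact: HxHy.
  by exists Hx => //; apply: subspace_lin => //; exact: HyHx.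
by move=> a Aa; exists H0 => //; exact: AH0.
Qed.

Lemma hyperplane_avoiding A w : subspace A -> ~ A w ->
  exists H, avoiding A w H /\ forall z, adjoin H w z.
Proof.
move=> sA nAw.
(* [set0] must be allowed: it is the union of the empty chain. *)
have [H [avH maxH]] : exists H, (H = set0 \/ avoiding A w H) /\
    forall B, H `<` B -> ~ (B = set0 \/ avoiding A w B).
  apply: Zorn_bigcup => F Fav Ftot.
  have [neF|] := pselect (exists2 H, F H & H !=set0).
    by right; exact: avoiding_bigcup_chain.
  move/forallPNP => eF; left; apply/seteqP; split=> // x [H FH Hx].
  by apply: (eF H FH); exists x.
have [{avH}sH AH nHw] : avoiding A w H.
  case: avH => // H0; exfalso; apply: (maxH A); last by right; split.
  by rewrite H0; split=> // /(_ 0 (subspace0 sA)).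
exists H; split=> // z; have [Hz|nHz] := pselect (H z).
  exact: sub_adjoin.
apply: adjoin_exchange => //; apply: contrapT => nw.
apply: (maxH (adjoin H z)); last first.
  right; split; [exact: subspace_adjoin|exact: subset_trans (@sub_adjoin _ _ H z)|done].
by split; [exact: sub_adjoin|move=> /(_ z (adjoin_vec _ sH))].
Qed.

Lemma adjoin_coef_uniq H w c1 c2 h1 h2 : subspace H -> ~ H w -> H h1 -> H h2 ->
  c1 *: w + h1 = c2 *: w + h2 -> c1 = c2.
Proof.
move=> sH nHw Hh1 Hh2 e; apply/eqP; rewrite -subr_eq0; apply/eqP; apply: contrapT => c0.
have e' : (c1 - c2) *: w = h2 - h1.
  by rewrite scalerBl (canRL (addrK h1) e) addrAC [c2 *: w + _]addrC addrK.
apply: nHw; rewrite -(divr_scalerK w c0) e'.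
by apply: subspaceZ => //; exact: subspaceB.
Qed.

Lemma linear_form_separating A w : subspace A -> ~ A w ->
  exists lam, [/\ linear_form lam, forall x, A x -> lam x = 0 & lam w = 1].
Proof.
move=> sA nAw; have [H [[sH AH nHw] span]] := hyperplane_avoiding sA nAw.
pose lam z := projT1 (cid (span z)).
have lamP z : exists2 h, H h & z = lam z *: w + h.
  by rewrite /lam; case: (cid (span z)) => c /= [h [Hh ->]]; exists h.
have lamE c h z : H h -> z = c *: w + h -> lam z = c.
  move=> Hh ez; have [h' Hh' ez'] := lamP z.
  by apply: (adjoin_coef_uniq sH nHw Hh' Hh); rewrite -ez'.
exists lam; split.
- move=> a x y; have [hx Hhx ex] := lamP x; have [hy Hhy ey] := lamP y.
  apply: (lamE _ (a *: hx + hy)); first exact: subspace_lin.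
  by rewrite {1}ex {1}ey scalerDr scalerA addrACA scalerDl.
- by move=> x Ax; apply: (lamE _ x); [exact: AH|rewrite scale0r add0r].
- by apply: (lamE _ 0); [exact: subspace0|rewrite scale1r addr0].
Qed.

Lemma Gset_involution X E s : Gset X -> subspace E -> linear_on setT s -> involutive s ->
  (forall x, X x -> E (s x)) -> (forall e, E e -> X (s e)) -> Gset E.
Proof.
move=> [sX [f [lf [inj sur]]]] sE ls ss XE EX; split=> //.
have sT : subspace [set: V] by [].
exists (s \o f \o s); split; [|split].
- by move=> a x y Ex Ey; rewrite /= ls // lf ?ls //; exact: EX.
- move=> x Ex /EX; rewrite /= ss => /(inj _ (EX _ Ex)) sx0.
  by rewrite -[x]ss sx0 (linear_on0 sT ls).
- move=> v; have [x [Xx Xfx]] := sur (s v).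
  exists (s x); split; first exact: XE.
  by rewrite /= ss -[v in _ - v]ss -(linear_onB sT ls) //; exact: XE.
Qed.

Lemma Gset_codim1_star M X E : Gset X -> subspace M -> subspace E ->
  codim1 M X -> codim1 M E -> Gset E.
Proof.
move=> GX sM sE cX cE; have sX : subspace X by case: GX.
have [MX [u [Xu [nMu Xspan]]]] := cX; have [ME [v [Ev [nMv Espan]]]] := cE.
have [Eu|nEu] := pselect (E u); first by rewrite -(codim1_inj sM sX sE cX cE Xu nMu Eu).
have [Xv|nXv] := pselect (X v); first by rewrite (codim1_inj sM sE sX cE cX Ev nMv Xv).
have [lam [flam lamE lamu]] := linear_form_separating sE nEu.
have [mu [fmu muX muv]] := linear_form_separating sX nXv.
(* The reflection [s x = x + (lam x - mu x) *: (v - u)] is an involution exchanging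
   [X = M + K u] and [E = M + K v]. *)
have [d ed] : exists d, d = v - u by eexists.
pose rho x := lam x - mu x; pose s x := x + rho x *: d.
have frho : linear_form rho by move=> a x y; rewrite /rho flam fmu mulrBr opprD addrACA.
have rho_d : rho d = -1 - 1.
  by rewrite /rho ed !linear_formB // lamu muv (lamE _ Ev) (muX _ Xu) !sub0r subr0.
apply: (Gset_involution (s := s) GX sE).
- by move=> a x y _ _; rewrite /s frho scalerDl scalerDr scalerA addrACA.
- move=> x; rewrite /s linear_formD // linear_formZ // rho_d.
  by rewrite mulrBr mulrN1 mulr1 addrA subrr add0r scaleNr addrK.
- move=> x /Xspan [c [m [Mm ->]]]; rewrite /s.
  have -> : rho (c *: u + m) = c.
    rewrite /rho flam fmu lamu (lamE _ (ME _ Mm)) (muX _ Xu) (muX _ (MX _ Mm)).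
    by rewrite mulr1 mulr0 !addr0 subr0.
  rewrite ed scalerBr addrAC addrCA subrr addr0.
  by apply: subspace_lin => //; exact: ME.
- move=> e /Espan [c [m [Mm ->]]]; rewrite /s.
  have -> : rho (c *: v + m) = - c.
    rewrite /rho flam fmu muv (lamE _ Ev) (lamE _ (ME _ Mm)) (muX _ (MX _ Mm)).
    by rewrite mulr1 mulr0 !addr0 sub0r.
  rewrite ed scaleNr scalerBr opprB addrAC addrCA subrr addr0.
  by apply: subspace_lin => //; exact: MX.
Qed.

Lemma codim1_addsp_star M E1 E2 : subspace M -> subspace E1 -> subspace E2 ->
  codim1 M E1 -> codim1 M E2 -> E1 <> E2 -> codim1 E1 (addsp E1 E2).
Proof.
move=> sM s1 s2 c1 c2 ne; have [ME1 _] := c1; have [_ [v [E2v [nMv _]]]] := c2.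
have nE1v : ~ E1 v by move=> E1v; apply: ne; apply: (codim1_inj sM s1 s2 c1 c2 E1v).
suff -> : addsp E1 E2 = adjoin E1 v by exact: codim1_adjoin.
apply/seteqP; split; last exact: adjoin_addsp.
apply: addsp_min; [exact: subspace_adjoin|exact: sub_adjoin|].
rewrite (codim1E sM s2 c2 E2v nMv); apply: adjoin_min; first exact: subspace_adjoin.
  by apply: subset_trans ME1 _; exact: sub_adjoin.
exact: adjoin_vec.
Qed.

Lemma addsp_codim1_top N E1 E2 : subspace N -> subspace E1 -> subspace E2 ->
  codim1 E1 N -> codim1 E2 N -> E1 <> E2 -> addsp E1 E2 = N.
Proof.
move=> sN s1 s2 c1 c2 ne; have [E1N _] := c1; have [E2N _] := c2.
have /existsPNP [p E2p nE1p] : ~ E2 `<=` E1.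
  by move=> E21; apply: ne; apply: esym; exact: codim1_uniq c2 c1.
apply/seteqP; split; first exact: addsp_min.
by apply: subset_trans (codim1_sub_adjoin s1 c1 (E2N p E2p) nE1p) _; exact: adjoin_addsp.
Qed.

Lemma Gset_codim1_top N X E : Gset X -> subspace N -> subspace E ->
  codim1 X N -> codim1 E N -> Gset E.
Proof.
move=> GX sN sE cX cE; have sX : subspace X by case: GX.
have [<-|neXE] := pselect (X = E); first done.
have NXE := addsp_codim1_top sN sX sE cX cE neXE.
apply: (Gset_codim1_star GX (subspaceI sX sE) sE).
  by apply: codim1_cap => //; rewrite NXE.
by rewrite setIC; apply: codim1_cap => //; rewrite addspC NXE.
Qed.

Lemma adj_clique_star M : star_base M -> adj_clique (star M).
Proof.
move=> [sM [X [GX cX]]]; split=> [E [sE cE]|E1 E2 [s1 c1] [s2 c2] ne].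
  exact: Gset_codim1_star GX sM sE cX cE.
split; first exact: codim1_addsp_star sM s1 s2 c1 c2 ne.
by rewrite addspC; apply: codim1_addsp_star sM s2 s1 c2 c1 _; apply: nesym.
Qed.

Lemma adj_clique_top N : top_base N -> adj_clique (top N).
Proof.
move=> [sN [X [GX cX]]]; split=> [E [sE cE]|E1 E2 [s1 c1] [s2 c2] ne].
  exact: Gset_codim1_top GX sN sE cX cE.
by rewrite /adjacent (addsp_codim1_top sN s1 s2 c1 c2 ne).
Qed.

Lemma adjacent_star_sup M X Y : dim_gt2 V -> subspace M -> Gset Y -> star M X ->
  (forall E, star M E -> adjacent Y E) -> M `<=` Y.
Proof.
move=> dV sM GY starX adjY; have [_ [MX _]] := starX; have [sY _] := GY.
apply: contrapT => /existsPNP [m0 Mm0 nYm0].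
have M_Ym0 : M `<=` adjoin Y m0.
  apply: (subset_trans MX); apply: (subset_trans (addsp_subr (Y := X) sY)).
  exact: codim1_sub_adjoin sY (adjY X starX).1 (addsp_subr sY (MX m0 Mm0)) nYm0.
have [w nw] := Gset_adjoin_not_full m0 dV GY.
have nMw : ~ M w by move/M_Ym0.
have [cYE _] := adjY _ (conj (subspace_adjoin w sM) (codim1_adjoin sM nMw)).
apply: nw (codim1_sub_adjoin sY cYE _ nYm0 _); apply: (addsp_subr sY).
  exact: sub_adjoin.
exact: adjoin_vec.
Qed.

Lemma star_maximal M C : dim_gt2 V -> star_base M -> adj_clique C ->
  star M `<=` C -> C `<=` star M.
Proof.
move=> dV [sM [X [GX cX]]] [CG Cadj] starC Y CY; apply: contrapT => nY.
have GY := CG Y CY; have sY : subspace Y by case: GY.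
have sX : subspace X by case: GX.
have adjY E : star M E -> adjacent Y E.
  by move=> hE; apply: Cadj CY (starC _ hE) _ => eYE; apply: nY; rewrite eYE.
have MY := adjacent_star_sup dV sM GY (conj sX cX) adjY.
have /existsPNP [y Yy nMy] : ~ Y `<=` M.
  move=> YM; apply: (adjacent_not_sub sX (adjacent_sym (adjY X (conj sX cX)))).
  exact: subset_trans YM cX.1.
apply: (adjacent_not_sub sY (adjY _ (conj (subspace_adjoin y sM) (codim1_adjoin sM nMy)))).
exact: adjoin_min.
Qed.

Lemma top_kernel N lam n : subspace N -> linear_form lam -> N n -> lam n = 1 ->
  top N [set e | N e /\ lam e = 0].
Proof.
move=> sN flam Nn lamn; split.
  split; first by split; [exact: subspace0|exact: linear_form0].
  by move=> a x y [Nx lx] [Ny ly]; split; [exact: subspace_lin|rewrite flam lx ly mulr0 addr0].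
split; first by move=> e [].
exists n; split=> //; split; first by move=> [_]; rewrite lamn => /eqP; rewrite oner_eq0.
move=> e Ne; exists (lam e), (e - lam e *: n); split; last by rewrite addrC subrK.
split; first by apply: subspaceB => //; exact: subspaceZ.
by rewrite linear_formB // linear_formZ // lamn mulr1 subrr.
Qed.

Lemma adjacent_top_sub N X Y : dim_gt2 V -> subspace N -> Gset Y -> top N X ->
  (forall E, top N E -> adjacent Y E) -> Y `<=` N.
Proof.
move=> dV sN GY topX adjY; have [sX [XN _]] := topX.
apply: contrapT => /existsPNP [y0 Yy0 nNy0].
have /existsNP [y /not_implyP [Yy /forallNP nline]] : ~ forall y, Y y -> exists c, y = c *: y0.
  exact: Gset_not_in_line dV GY Yy0.
have [c [x [Xx ey]]] := codim1_sub_adjoin sX (adjacent_sym (adjY X topX)).1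
  (addsp_subr sX Yy0) (fun Xy0 => nNy0 (XN _ Xy0)) (addsp_subr sX Yy).
have nx0 : ~ [set 0 : V] x by move=> x0; apply: (nline c); rewrite ey x0 addr0.
have [lam [flam _ lamx]] := linear_form_separating subspace_zero nx0.
have topE := top_kernel sN flam (XN x Xx) lamx; have [sE _] := topE.
have [d [e [[Ne lame] ey']]] := codim1_sub_adjoin sE (adjacent_sym (adjY _ topE)).1
  (addsp_subr sE Yy0) (fun Ey0 => nNy0 Ey0.1) (addsp_subr sE Yy).
have edc : (d - c) *: y0 = x - e.
  have -> : x = y - c *: y0 by rewrite ey addrAC subrr add0r.
  have -> : e = y - d *: y0 by rewrite ey' addrAC subrr add0r.
  by rewrite opprB scalerBl [RHS]addrC addrA subrK.
have [dc|dc] := pselect (d - c = 0).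
  move: lamx; have -> : x = e by apply/eqP; rewrite -subr_eq0 -edc dc scale0r.
  by rewrite lame => /eqP; rewrite eq_sym oner_eq0.
apply: nNy0; rewrite -(divr_scalerK y0 dc) edc.
by apply: subspaceZ => //; apply: subspaceB => //; exact: XN.
Qed.

Lemma top_maximal N C : dim_gt2 V -> top_base N -> adj_clique C ->
  top N `<=` C -> C `<=` top N.
Proof.
move=> dV [sN [X [GX cX]]] [CG Cadj] topC Y CY; apply: contrapT => nY.
have GY := CG Y CY; have sY : subspace Y by case: GY.
have sX : subspace X by case: GX.
have adjY E : top N E -> adjacent Y E.
  by move=> hE; apply: Cadj CY (topC _ hE) _ => eYE; apply: nY; rewrite eYE.
have YN := adjacent_top_sub dV sN GY (conj sX cX) adjY.
have /existsPNP [n Nn nYn] : ~ N `<=` Y.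
  by move=> NY; apply: (adjacent_not_sub sY (adjY X (conj sX cX))); exact: subset_trans cX.1 NY.
have [lam [flam lamY lamn]] := linear_form_separating sY nYn.
have topE := top_kernel sN flam Nn lamn; have [sE _] := topE.
apply: (adjacent_not_sub sE (adjacent_sym (adjY _ topE))) => y Yy.
by split; [exact: YN|exact: lamY].
Qed.

Lemma adjacent_codim1_star M X Z : subspace M -> subspace X -> subspace Z ->
  adjacent X Z -> codim1 M X -> M `<=` Z -> codim1 M Z.
Proof.
move=> sM sX sZ adjXZ cMX MZ.
have MXZ : M `<=` X `&` Z by move=> m Mm; split; [exact: cMX.1|exact: MZ].
rewrite (codim1_uniq sM (subspaceI sX sZ) MXZ cMX (adjacent_codim1_cap sX sZ adjXZ)).
by rewrite setIC; apply: adjacent_codim1_cap sZ sX (adjacent_sym adjXZ).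
Qed.

Lemma adjacent_codim1_top N X Z : subspace N -> subspace X -> subspace Z ->
  adjacent X Z -> codim1 X N -> Z `<=` N -> codim1 Z N.
Proof.
move=> sN sX sZ [cX cZ] cXN ZN.
by rewrite -(codim1_sup_uniq sX (subspace_addsp sX sZ) (addsp_min sN cXN.1 ZN) cX cXN).
Qed.

Lemma adjacent_triangle X Y Z : subspace X -> subspace Y -> subspace Z ->
  adjacent X Y -> adjacent X Z -> adjacent Y Z ->
  X `&` Y `<=` Z \/ Z `<=` addsp X Y.
Proof.
move=> sX sY sZ adjXY adjXZ adjYZ.
have [[b [Yb Zb] nXb]|/forallPNP YZ_X] := pselect (exists2 b, (Y `&` Z) b & ~ X b).
  right; apply: subset_trans (adjoin_addsp sX sY Yb).
  move=> z Zz; apply: (codim1_sub_adjoin sX adjXZ.1 (addsp_subr sX Zb) nXb).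
  exact: addsp_subr.
left; have YZYX : Y `&` Z `<=` Y `&` X.
  by move=> y [Yy Zy]; split=> //; apply: contrapT; exact: YZ_X y (conj Yy Zy).
have := codim1_uniq (subspaceI sY sZ) (subspaceI sY sX) YZYX
  (adjacent_codim1_cap sY sZ adjYZ) (adjacent_codim1_cap sY sX (adjacent_sym adjXY)).
by move=> eYZX x [Xx Yx]; have [] : (Y `&` Z) x by rewrite eYZX.
Qed.

Lemma codim1_cap_sub X S N : subspace X -> subspace N -> X `<=` N ->
  codim1 X S -> ~ S `<=` N -> S `&` N `<=` X.
Proof.
move=> sX sN XN cXS /existsPNP [p Sp nNp] s [Ss Ns]; apply: contrapT => nXs.
apply/nNp/(adjoin_min sN XN Ns); apply: (adjoin_exchange sX nXs).
exact: codim1_sub_adjoin sX cXS Sp (fun Xp => nNp (XN p Xp)) s Ss.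
Qed.

Lemma adj_clique_dichotomy C X Y : adj_clique C -> C X -> C Y -> X <> Y ->
  (forall Z, C Z -> X `&` Y `<=` Z) \/ (forall Z, C Z -> Z `<=` addsp X Y).
Proof.
move=> [CG Cadj] CX CY neXY.
have sub Z : C Z -> subspace Z by move/CG => [].
have sX := sub X CX; have sY := sub Y CY.
have adjX Z : C Z -> Z <> X -> adjacent X Z by move=> CZ /nesym; exact: Cadj CX CZ.
have tri Z : C Z -> X `&` Y `<=` Z \/ Z `<=` addsp X Y.
  move=> CZ; have [->|neZX] := pselect (Z = X); first by left=> ? [].
  have [->|neZY] := pselect (Z = Y); first by left=> ? [].
  apply: adjacent_triangle (sub Z CZ) (Cadj _ _ CX CY neXY) (adjX Z CZ neZX) _ => //.
  exact: Cadj CY CZ (nesym neZY).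
have [|/existsNP [Z1 /not_implyP [CZ1 nMZ1]]] := pselect (forall Z, C Z -> X `&` Y `<=` Z).
  by left.
right=> Z CZ; have [MZ|//] := tri Z CZ; apply: contrapT => nZN.
have Z1N : Z1 `<=` addsp X Y by case: (tri Z1 CZ1).
have neZ1X : Z1 <> X by move=> eZ1; apply: nMZ1; rewrite eZ1 => ? [].
have neZX : Z <> X by move=> eZ; apply: nZN; rewrite eZ; exact: addsp_subl.
have neZZ1 : Z <> Z1 by move=> eZ; apply: nMZ1; rewrite -eZ.
have [XYZ1|Z1XZ] := adjacent_triangle sX (sub Z CZ) (sub Z1 CZ1)
  (adjX Z CZ neZX) (adjX Z1 CZ1 neZ1X) (Cadj _ _ CZ CZ1 neZZ1).
  by apply: nMZ1 => x [Xx Yx]; apply: XYZ1; split=> //; exact: MZ.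
(* [Z1] lies in [(X + Z) `&` (X + Y)], which is [X] since [X] is a hyperplane of [X + Z] *)
apply: (adjacent_not_sub sX (adjX Z1 CZ1 neZ1X)) => z Z1z.
apply: (codim1_cap_sub sX (subspace_addsp sX sY) (addsp_subl sY) (adjX Z CZ neZX).1).
  by move=> XZN; apply/nZN/(subset_trans (addsp_subr sX)).
by split; [exact: Z1XZ|exact: Z1N].
Qed.

Lemma top_base_of_Gset X : dim_gt2 V -> Gset X -> exists N, top_base N /\ top N X.
Proof.
move=> dV GX; have sX : subspace X by case: GX.
have [w nw] := Gset_adjoin_not_full 0 dV GX.
have nXw : ~ X w by move=> Xw; apply: nw; exact: sub_adjoin.
have cX := codim1_adjoin sX nXw.
by exists (adjoin X w); split; [split; [exact: subspace_adjoin|exists X]|].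
Qed.

Lemma adj_clique_sub_star_or_top C : dim_gt2 V -> (exists X, Gset X) -> adj_clique C ->
  (exists M, star_base M /\ C `<=` star M) \/ (exists N, top_base N /\ C `<=` top N).
Proof.
move=> dV [X0 GX0] clC; have [CG Cadj] := clC.
have sub Z : C Z -> subspace Z by move/CG => [].
have [[X CX [Y CY neXY]]|single] := pselect (exists2 X, C X & exists2 Y, C Y & X <> Y).
  have sX := sub X CX; have sY := sub Y CY; have adjXY := Cadj _ _ CX CY neXY.
  have [MZ|ZN] := adj_clique_dichotomy clC CX CY neXY;
    [left; exists (X `&` Y)|right; exists (addsp X Y)].
  - have cM := adjacent_codim1_cap sX sY adjXY.
    split; first by split; [exact: subspaceI|exists X; split; [exact: CG|]].
    move=> Z CZ; split; first exact: sub.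
    have [<-|neXZ] := pselect (X = Z); first done.
    exact: adjacent_codim1_star (subspaceI sX sY) sX (sub Z CZ) (Cadj _ _ CX CZ neXZ) cM (MZ Z CZ).
  - have sN := subspace_addsp sX sY.
    split; first by split=> //; exists X; split; [exact: CG|exact: adjXY.1].
    move=> Z CZ; split; first exact: sub.
    have [<-|neXZ] := pselect (X = Z); first exact: adjXY.1.
    exact: adjacent_codim1_top sN sX (sub Z CZ) (Cadj _ _ CX CZ neXZ) adjXY.1 (ZN Z CZ).
right; have [X [GX CX]] : exists X, Gset X /\ C `<=` [set X].
  have [[X CX]|/forallNP nC] := pselect (exists X, C X).
    exists X; split; first exact: CG.
    by move=> Z CZ; apply: contrapT => neZX; apply: single; exists Z => //; exists X.
  by exists X0; split=> // Z /nC.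
have [N [tbN topX]] := top_base_of_Gset dV GX.
by exists N; split=> // Z /CX ->.
Qed.

Lemma maximal_adj_clique_star M : dim_gt2 V -> star_base M -> maximal_adj_clique (star M).
Proof.
move=> dV sb; split=> [|C clC starC]; first exact: adj_clique_star.
by apply/seteqP; split=> //; exact: star_maximal dV sb clC starC.
Qed.

Lemma maximal_adj_clique_top N : dim_gt2 V -> top_base N -> maximal_adj_clique (top N).
Proof.
move=> dV tb; split=> [|C clC topC]; first exact: adj_clique_top.
by apply/seteqP; split=> //; exact: top_maximal dV tb clC topC.
Qed.

Lemma maximal_adj_clique_star_or_top C : dim_gt2 V -> (exists X, Gset X) ->
  maximal_adj_clique C ->
  (exists M, star_base M /\ C = star M) \/ (exists N, top_base N /\ C = top N).
Proof.
move=> dV hG [clC maxC].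
have [[M [sb CM]]|[N [tb CN]]] := adj_clique_sub_star_or_top dV hG clC.
  by left; exists M; split=> //; apply: esym; exact: maxC (adj_clique_star sb) CM.
by right; exists N; split=> //; apply: esym; exact: maxC (adj_clique_top tb) CN.
Qed.

End DivisionRing.

Theorem proposition2p4 (K : unitRingType) (V : lmodType K) :
  division_ring K ->
  dim_gt2 V ->
  (exists X : set V, Gset X) ->
  forall C : set (set V),
    maximal_adj_clique C <->
    ((exists M, star_base M /\ C = star M) \/
     (exists N, top_base N /\ C = top N)).
Proof.
move=> divK dV hG C; split; first exact: maximal_adj_clique_star_or_top.
case=> [[M [sb ->]]|[N [tb ->]]].
  exact: maximal_adj_clique_star.
exact: maximal_adj_clique_top.
Qed.
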